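(* For any partition $\lambda=(\lambda_1,\dots,\lambda_n)$ with at most $n$ parts and generic $a,b,q,p,t\in\mathbb{C}$, \begin{multline*} W_\lambda(q^{\lambda}t^{\delta(n)};q,p,t,a,b)=\prod_{k=1}^n\left\{\frac{(qbt^{n-k},qt^{n-k})_{\lambda_k}(at^{2n-2k})_{2\lambda_k}}{((a/b)t^{n-k},at^{n-k})_{\lambda_k}(qbt^{n+1-2k})_{2\lambda_k}}t^{(n+1-2k)\lambda_k}\right\}\\ \cdot(a/(qb))^{|\lambda|}\prod_{1\le i<j\le n}\frac{(qt^{j-i-1})_{\lambda_i-\lambda_j}(at^{2n-i-j})_{\lambda_i+\lambda_j}}{(qt^{j-i})_{\lambda_i-\lambda_j}(at^{1+2n-i-j})_{\lambda_i+\lambda_j}}. \end{multline*}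
   Context: Fix $|p|<1$; parameters generic. $E(x)=(x;p)_\infty(p/x;p)_\infty$. For integer $m\ge0$, $(a)_m=\prod_{k=0}^{m-1}E(aq^k)$, for $m<0$, $(a)_m=1/(aq^m)_{-m}$; for a partition $\lambda$ with $n$ parts $(a)_\lambda=\prod_{i=1}^n(at^{1-i})_{\lambda_i}$; several arguments denote products; integer subscripts denote the single-integer symbol. $|\lambda|=\sum_i\lambda_i$, $q^\lambda t^{\delta(n)}=(q^{\lambda_1}t^{n-1},\dots,q^{\lambda_n})$. For $n$-part partitions with $\lambda_1\ge\mu_1\ge\dots\ge\lambda_n\ge\mu_n$, $\lambda_{n+1}=\mu_{n+1}=0$, $H_{\lambda/\mu}(q,p,t,b)=\prod_{1\le i<j\le n}\Big\{\frac{(q^{\mu_i-\mu_{j-1}}t^{j-i})_{\mu_{j-1}-\lambda_j}(q^{\lambda_i+\lambda_j}t^{3-j-i}b)_{\mu_{j-1}-\lambda_j}}{(q^{\mu_i-\mu_{j-1}+1}t^{j-i-1})_{\mu_{j-1}-\lambda_j}(q^{\lambda_i+\lambda_j+1}t^{2-j-i}b)_{\mu_{j-1}-\lambda_j}}\frac{(q^{\lambda_i-\mu_{j-1}+1}t^{j-i-1})_{\mu_{j-1}-\lambda_j}}{(q^{\lambda_i-\mu_{j-1}}t^{j-i})_{\mu_{j-1}-\lambda_j}}\Big\}\prod_{1\le i<j-1\le n}\frac{(q^{\mu_i+\lambda_j+1}t^{1-j-i}b)_{\mu_{j-1}-\lambda_j}}{(q^{\mu_i+\lambda_j}t^{2-j-i}b)_{\mu_{j-1}-\lambda_j}}$;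 for $x\in\mathbb{C}$, $W_{\lambda/\mu}(x;q,p,t,a,b)=H_{\lambda/\mu}\frac{(x^{-1},ax)_\lambda(qbx/t,qb/(axt))_\mu}{(x^{-1},ax)_\mu(qbx,qb/(ax))_\lambda}\prod_{i=1}^n\frac{E(bt^{1-2i}q^{2\mu_i})}{E(bt^{1-2i})}\frac{(bt^{1-2i})_{\mu_i+\lambda_{i+1}}}{(bqt^{-2i})_{\mu_i+\lambda_{i+1}}}t^{i(\mu_i-\lambda_{i+1})}$ (zero if the interlacing fails); recursively $W_{\lambda/\mu}(y,z_1,\dots,z_\ell;q,p,t,a,b)=\sum_\nu W_{\lambda/\nu}(yt^{-\ell};q,p,t,at^{2\ell},bt^\ell)W_{\nu/\mu}(z_1,\dots,z_\ell;q,p,t,a,b)$ over $\nu$ with $\lambda_1\ge\nu_1\ge\dots\ge\lambda_n\ge\nu_n\ge0$; $W_\lambda=W_{\lambda/0}$. *)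

From Stdlib Require Import Reals ZArith List Bool.
From Coquelicot Require Import Coquelicot.
Import ListNotations.
Open Scope bool_scope.
Open Scope C_scope.

Fixpoint cpow (x : C) (n : nat) : C :=
  match n with O => 1 | S m => x * cpow x m end.
Definition zpow (x : C) (z : Z) : C :=
  match z with
  | Z0 => 1
  | Zpos k => cpow x (Pos.to_nat k)
  | Zneg k => / cpow x (Pos.to_nat k)
  end.

Definition prodC {A : Type} (l : list A) (f : A -> C) : C :=
  fold_right (fun i acc => f i * acc) 1 l.
Definition sumC {A : Type} (l : list A) (f : A -> C) : C :=
  fold_right (fun i acc => f i + acc) 0 l.

(* (x;p)_infinity = prod_{k>=0} (1 - x p^k), as the limit of its partial
   products (taken componentwise; the product converges for |p| < 1). *)
Definition qpoch_part (x p : C) (N : nat) : C :=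
  prodC (seq 0 N) (fun k => 1 - x * cpow p k).
Definition qpoch_inf (x p : C) : C :=
  (real (Lim_seq (fun N => Re (qpoch_part x p N))),
   real (Lim_seq (fun N => Im (qpoch_part x p N)))).

Definition theta (p x : C) : C := qpoch_inf x p * qpoch_inf (p / x) p.

Definition esf_nat (p q a : C) (m : nat) : C :=
  prodC (seq 0 m) (fun k => theta p (a * cpow q k)).
Definition esf (p q a : C) (m : Z) : C :=
  if (0 <=? m)%Z then esf_nat p q a (Z.to_nat m)
  else / esf_nat p q (a * zpow q m) (Z.to_nat (- m)).

(* partitions with n parts are lists of length n; 1-based access,
   with part l (n+1) = 0 *)
Definition part (l : list nat) (i : nat) : nat := nth (i - 1) l 0%nat.
Definition zpart (l : list nat) (i : nat) : Z := Z.of_nat (part l i).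
Definition zn (i : nat) : Z := Z.of_nat i.

Definition is_partition (l : list nat) : Prop :=
  forall i, (1 <= i < length l)%nat -> (part l (S i) <= part l i)%nat.

Definition psize (l : list nat) : nat := fold_right Nat.add 0%nat l.

Definition interlaceb (l m : list nat) : bool :=
  Nat.eqb (length m) (length l) &&
  forallb (fun i => Nat.leb (part m i) (part l i) && Nat.leb (part l (S i)) (part m i))
          (seq 1 (length l)).

Fixpoint interl (l : list nat) : list (list nat) :=
  match l with
  | [] => [[]]
  | x :: r =>
      let lo := hd 0%nat r in
      flat_map (fun v => map (cons v) (interl r)) (seq lo (S (x - lo)))
  end.

Section W.
Variables (q p t : C).

Definition mono (c : C) (i j : Z) : C := c * zpow q i * zpow t j.

Definition esf_part (c : C) (l : list nat) : C :=
  prodC (seq 1 (length l)) (fun i => esf p q (c * zpow t (1 - zn i)) (zpart l i)).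

(* (c)_lambda / (c)_mu, with common factors cancelled:
   prod_i (c t^{1-i} q^{mu_i})_{lambda_i - mu_i} *)
Definition esf_ratio (c : C) (l m : list nat) : C :=
  prodC (seq 1 (length l))
    (fun i => esf p q (c * zpow t (1 - zn i) * zpow q (zpart m i)) (zpart l i - zpart m i)).

Definition Hfac (b : C) (l m : list nat) : C :=
  let n := length l in
  let L := zpart l in let M := zpart m in
  prodC (seq 1 n) (fun i => prodC (seq (S i) (n - i)) (fun j =>
    let e := (M (j - 1)%nat - L j)%Z in
    esf p q (mono 1 (M i - M (j - 1)%nat) (zn j - zn i)) e
    * esf p q (mono b (L i + L j) (3 - zn j - zn i)) e
    / (esf p q (mono 1 (M i - M (j - 1)%nat + 1) (zn j - zn i - 1)) e
       * esf p q (mono b (L i + L j + 1) (2 - zn j - zn i)) e)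
    * esf p q (mono 1 (L i - M (j - 1)%nat + 1) (zn j - zn i - 1)) e
    / esf p q (mono 1 (L i - M (j - 1)%nat) (zn j - zn i)) e))
  * prodC (seq 1 n) (fun i => prodC (seq (S (S i)) (n - i)) (fun j =>
    let e := (M (j - 1)%nat - L j)%Z in
    esf p q (mono b (M i + L j + 1) (1 - zn j - zn i)) e
    / esf p q (mono b (M i + L j) (2 - zn j - zn i)) e)).

Definition W1 (a b x : C) (l m : list nat) : C :=
  if interlaceb l m then
    let n := length l in
    let L := zpart l in let M := zpart m in
    Hfac b l m
    * esf_ratio (/ x) l m * esf_ratio (a * x) l m
    * esf_part (q * b * x / t) m * esf_part (q * b / (a * x * t)) m
    / (esf_part (q * b * x) l * esf_part (q * b / (a * x)) l)
    * prodC (seq 1 n) (fun i =>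
        theta p (mono b (2 * M i) (1 - 2 * zn i)) / theta p (mono b 0 (1 - 2 * zn i))
        * esf p q (mono b 0 (1 - 2 * zn i)) (M i + L (S i))
        / esf p q (mono b 1 (- 2 * zn i)) (M i + L (S i))
        * zpow t (zn i * (M i - L (S i))))
  else 0.

(* multivariable W_{lambda/mu}(x_1,...,x_k; q,p,t,a,b), by the branching rule *)
Fixpoint Wskew (xs : list C) (a b : C) (l m : list nat) : C :=
  match xs with
  | [] => if list_eq_dec Nat.eq_dec l m then 1 else 0
  | y :: zs =>
      let k := zn (length zs) in
      sumC (interl l) (fun nu =>
        W1 (a * zpow t (2 * k)) (b * zpow t k) (y * zpow t (- k)) l nu
        * Wskew zs a b nu m)
  end.

Definition W (xs : list C) (a b : C) (l : list nat) : C :=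
  Wskew xs a b l (repeat 0%nat (length l)).

End W.

Definition generic (p q t a b : C) : Prop :=
  Cmod p < 1 /\ q <> 0 /\ t <> 0 /\ a <> 0 /\ b <> 0 /\
  forall i j k l : Z, (i, j, k, l) <> (0%Z, 0%Z, 0%Z, 0%Z) ->
    theta p (zpow q i * zpow t j * zpow a k * zpow b l) <> 0.

Definition spec_point (q t : C) (l : list nat) : list C :=
  map (fun i => zpow q (zpart l i) * zpow t (zn (length l) - zn i)) (seq 1 (length l)).

From Stdlib Require Import Reals ZArith List Lia Lra Bool Classical.
From Coquelicot Require Import Coquelicot.
Import ListNotations.
Open Scope C_scope.

(* Evaluate the branching rule one variable at a time.  At [x = q^y] the one-variable factor
   [W_{nu/kappa}(x)] contains [(1/x)_nu / (1/x)_kappa], hence the theta value [E(1) = 0],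
   whenever [kappa_1 <= y < nu_1]; by induction over the variables, [W_nu(q^mu t^delta)]
   vanishes unless [nu <= mu] partwise.  In the branching sum for [W_lambda(q^lambda t^delta)]
   interlacing gives [nu_i >= lambda_(i+1)], so only [nu = (lambda_2, ..., lambda_n, 0)]
   survives, and for it the factor [H] is [1].  By induction on [n] it remains to see that the
   single factor [W_{lambda/nu}(q^(lambda_1))] is the ratio of the right-hand sides for [lambda]
   and [(lambda_2, ..., lambda_n)]: it supplies the first row ([k = 1], [i = 1]) of the
   products, and its theta quotients together with a power of [t] shift [n - 1] to [n] in the
   remaining single-index factors.  That comparison only uses [(x)_(m+n) = (x)_m (x q^m)_n],
   the reflection [(x)_m = prod_s (- x q^s) (q^(1-m)/x)_m] (from [E(1/x) = - E(x)/x]) and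
   telescoping products. *)

Lemma Cinv_0 : / (0 : C) = 0.
Proof. apply injective_projections; simpl; unfold Rdiv; ring. Qed.

Lemma Cinv_neq_0 (x : C) : x <> 0 -> / x <> 0.
Proof. intros Hx H. apply C1_nz. rewrite <- (Cinv_l x Hx), H. ring. Qed.

Lemma Cinv_mult (x y : C) : / (x * y) = / x * / y.
Proof.
  destruct (Ceq_dec x 0) as [->|Hx]; [rewrite Cmult_0_l, Cinv_0; ring|].
  destruct (Ceq_dec y 0) as [->|Hy]; [rewrite Cmult_0_r, Cinv_0; ring|].
  field. split; assumption.
Qed.

Lemma Cdiv_mult (x y u v : C) : x * y / (u * v) = x / u * (y / v).
Proof. unfold Cdiv. rewrite Cinv_mult. ring. Qed.

Lemma Cmod_cpow (x : C) n : Cmod (cpow x n) = (Cmod x ^ n)%R.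
Proof. induction n; simpl; [apply Cmod_1|]. rewrite Cmod_mult, IHn. reflexivity. Qed.

Lemma Im_le_Cmod (c : C) : (Rabs (Im c) <= Cmod c)%R.
Proof.
  replace (Im c) with (Re (c * - Ci)) by (unfold Re, Im, Ci; simpl; ring).
  eapply Rle_trans; [apply re_le_Cmod|]. rewrite Cmod_mult, Cmod_opp, Cmod_Ci. lra.
Qed.

Section FiniteProducts.
Context {A : Type}.

Lemma prodC_app (l1 l2 : list A) (f : A -> C) : prodC (l1 ++ l2) f = prodC l1 f * prodC l2 f.
Proof. induction l1 as [|x l1 IH]; simpl; [ring|]. rewrite IH. ring. Qed.

Lemma prodC_ext (l : list A) (f g : A -> C) :
  (forall x, In x l -> f x = g x) -> prodC l f = prodC l g.
Proof. induction l as [|x l IH]; simpl; intros H; [reflexivity|]. rewrite H, IH; auto. Qed.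

Lemma prodC_mult (l : list A) (f g : A -> C) :
  prodC l (fun x => f x * g x) = prodC l f * prodC l g.
Proof. induction l as [|x l IH]; simpl; [ring|]. rewrite IH. ring. Qed.

Lemma prodC_inv (l : list A) (f : A -> C) : prodC l (fun x => / f x) = / prodC l f.
Proof.
  induction l as [|x l IH]; simpl.
  - apply injective_projections; simpl; field.
  - rewrite IH, Cinv_mult. reflexivity.
Qed.

Lemma prodC_div (l : list A) (f g : A -> C) :
  prodC l (fun x => f x / g x) = prodC l f / prodC l g.
Proof. unfold Cdiv. rewrite prodC_mult, prodC_inv. reflexivity. Qed.

Lemma prodC_map {B : Type} (l : list B) (h : B -> A) (f : A -> C) :
  prodC (map h l) f = prodC l (fun x => f (h x)).
Proof. induction l as [|x l IH]; simpl; [reflexivity|]. rewrite IH. reflexivity. Qed.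

Lemma prodC_eq1 (l : list A) (f : A -> C) : (forall x, In x l -> f x = 1) -> prodC l f = 1.
Proof. induction l as [|x l IH]; simpl; intros H; [reflexivity|]. rewrite H, IH; auto. ring. Qed.

Lemma prodC_eq0 (l : list A) (f : A -> C) (x : A) : In x l -> f x = 0 -> prodC l f = 0.
Proof.
  induction l as [|y l IH]; simpl; intros Hin H; [contradiction|].
  destruct Hin as [->|Hin]; [rewrite H|rewrite (IH Hin H)]; ring.
Qed.

Lemma prodC_neq0 (l : list A) (f : A -> C) : (forall x, In x l -> f x <> 0) -> prodC l f <> 0.
Proof.
  induction l as [|x l IH]; simpl; intros H; [apply C1_nz|].
  apply Cmult_neq_0; [apply H | apply IH]; auto.
Qed.

Lemma sumC_eq0 (l : list A) (f : A -> C) : (forall x, In x l -> f x = 0) -> sumC l f = 0.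
Proof. induction l as [|x l IH]; simpl; intros H; [reflexivity|]. rewrite H, IH; auto. ring. Qed.

Lemma sumC_single (l : list A) (f : A -> C) (x0 : A) : NoDup l -> In x0 l ->
  (forall x, In x l -> x <> x0 -> f x = 0) -> sumC l f = f x0.
Proof.
  induction l as [|y l IH]; simpl; intros Hnd Hin H; [contradiction|].
  inversion Hnd; subst. destruct Hin as [<-|Hin].
  - rewrite sumC_eq0; [ring|]. intros x Hx. apply H; auto. intros ->. contradiction.
  - rewrite H, IH; auto; [ring|]. intros ->. contradiction.
Qed.

End FiniteProducts.

Lemma prodC_seq_last s n (f : nat -> C) :
  prodC (seq s (S n)) f = prodC (seq s n) f * f (s + n)%nat.
Proof. rewrite seq_S, prodC_app. simpl. ring. Qed.

Lemma prodC_seq_shift s n (f : nat -> C) :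
  prodC (seq (S s) n) f = prodC (seq s n) (fun i => f (S i)).
Proof. rewrite <- seq_shift, prodC_map. reflexivity. Qed.

Lemma prodC_seq1_first (f : nat -> C) n :
  prodC (seq 1 (S n)) f = f 1%nat * prodC (seq 1 n) (fun j => f (S j)).
Proof. simpl. rewrite prodC_seq_shift. reflexivity. Qed.

Lemma prodC_seq_trim s m n (f g : nat -> C) : (m <= n)%nat ->
  (forall i, (s + m <= i)%nat -> f i = 1) -> (forall i, (s <= i < s + m)%nat -> f i = g i) ->
  prodC (seq s n) f = prodC (seq s m) g.
Proof.
  intros Hmn H1 Hfg. replace n with (m + (n - m))%nat by lia. rewrite seq_app, prodC_app.
  rewrite (prodC_eq1 (seq (s + m) _)).
  - rewrite Cmult_1_r. apply prodC_ext. intros i Hi. apply in_seq in Hi. apply Hfg. lia.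
  - intros i Hi. apply in_seq in Hi. apply H1. lia.
Qed.

Lemma prodC_telescope (f : nat -> C) s n : (forall i, f i <> 0) ->
  prodC (seq s n) (fun i => f i / f (S i)) = f s / f (s + n)%nat.
Proof.
  intros H. induction n as [|n IH].
  - simpl. rewrite Nat.add_0_r. field. apply H.
  - rewrite prodC_seq_last, IH, <- plus_n_Sm. field. split; apply H.
Qed.

Lemma cpow_neq0 (x : C) n : x <> 0 -> cpow x n <> 0.
Proof. intros H; induction n; simpl; [apply C1_nz | apply Cmult_neq_0; assumption]. Qed.

Lemma cpow_add (x : C) m n : cpow x (m + n) = cpow x m * cpow x n.
Proof. induction m as [|m IH]; simpl; [ring|]. rewrite IH. ring. Qed.

Lemma zpow_of_nat (x : C) n : zpow x (Z.of_nat n) = cpow x n.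
Proof. destruct n; [reflexivity|]. simpl. rewrite SuccNat2Pos.id_succ. reflexivity. Qed.

Lemma zpow_opp_of_nat (x : C) n : zpow x (- Z.of_nat n) = / cpow x n.
Proof.
  destruct n; simpl.
  - apply injective_projections; simpl; field.
  - rewrite SuccNat2Pos.id_succ. reflexivity.
Qed.

Lemma zpow_neq0 (x : C) z : x <> 0 -> zpow x z <> 0.
Proof.
  intros H; destruct z; simpl; [apply C1_nz | apply cpow_neq0 | apply Cinv_neq_0, cpow_neq0];
    assumption.
Qed.

Lemma zpow_succ (x : C) z : x <> 0 -> zpow x (Z.succ z) = zpow x z * x.
Proof.
  intros Hx. destruct (Z_lt_le_dec z 0) as [Hz|Hz].
  - replace z with (- Z.of_nat (S (Z.to_nat (- z - 1))))%Z by lia.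
    replace (Z.succ (- Z.of_nat (S (Z.to_nat (- z - 1)))))%Z
      with (- Z.of_nat (Z.to_nat (- z - 1)))%Z by lia.
    rewrite !zpow_opp_of_nat. simpl. field. split; [apply cpow_neq0|]; assumption.
  - replace z with (Z.of_nat (Z.to_nat z)) by lia. rewrite <- Nat2Z.inj_succ, !zpow_of_nat.
    simpl. ring.
Qed.

Lemma zpow_pred (x : C) z : x <> 0 -> zpow x (Z.pred z) = zpow x z / x.
Proof.
  intros Hx. rewrite <- (Z.succ_pred z) at 2. rewrite zpow_succ by assumption.
  field. assumption.
Qed.

Lemma zpow_add (x : C) m n : x <> 0 -> zpow x (m + n) = zpow x m * zpow x n.
Proof.
  intros Hx. induction n as [|n IH|n IH] using Z.peano_ind.
  - rewrite Z.add_0_r. simpl. ring.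
  - rewrite Z.add_succ_r, !zpow_succ, IH by assumption. ring.
  - rewrite Z.add_pred_r, !zpow_pred, IH by assumption. field. assumption.
Qed.

Lemma zpow_opp (x : C) z : x <> 0 -> zpow x (- z) = / zpow x z.
Proof.
  intros Hx. assert (Hz : zpow x z <> 0) by (apply zpow_neq0; assumption).
  replace (zpow x (- z)) with (/ zpow x z * zpow x (z + - z)).
  - rewrite Z.add_opp_diag_r. simpl. field. assumption.
  - rewrite zpow_add by assumption. field. assumption.
Qed.

Lemma zpow_sub (x : C) m n : x <> 0 -> zpow x (m - n) = zpow x m / zpow x n.
Proof. intros Hx. unfold Z.sub. rewrite zpow_add, zpow_opp by assumption. reflexivity. Qed.

Lemma zpow_double (x : C) z : x <> 0 -> zpow x (2 * z) = zpow x z * zpow x z.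
Proof. intros Hx. rewrite <- zpow_add by assumption. f_equal. lia. Qed.

Lemma zpow_opp_double (x : C) z : x <> 0 -> zpow x (-2 * z) = / (zpow x z * zpow x z).
Proof. intros Hx. rewrite <- zpow_double, <- zpow_opp by assumption. f_equal. lia. Qed.

Lemma zpow_0 (x : C) : zpow x 0 = 1.
Proof. reflexivity. Qed.

Lemma zpow_1 (x : C) : zpow x 1 = x.
Proof. simpl. ring. Qed.

Lemma zpow_m1 (x : C) : zpow x (-1) = / x.
Proof. simpl. f_equal. ring. Qed.

Ltac zpow_expand :=
  repeat first
    [ rewrite zpow_add by assumption | rewrite zpow_sub by assumption
    | rewrite zpow_opp by assumption | rewrite zpow_double by assumption
    | rewrite zpow_opp_double by assumption
    | rewrite zpow_0 | rewrite zpow_1 | rewrite zpow_m1 ].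

(** * The theta function *)

Lemma ex_finite_lim_seq_geom_increments (u : nat -> R) (K r : R) : (0 <= r < 1)%R ->
  (forall n, Rabs (u (S n) - u n) <= K * r ^ n)%R -> ex_finite_lim_seq u.
Proof.
  intros Hr Hu.
  assert (Hs : ex_series (fun n => u (S n) - u n)%R).
  { apply (@ex_series_le R_AbsRing R_CompleteNormedModule _ (fun n => K * r ^ n)%R);
      [exact Hu|].
    apply (ex_series_scal_l K (fun n => r ^ n)%R), ex_series_geom. rewrite Rabs_pos_eq; lra. }
  destruct Hs as [l Hl]. exists (u O + l)%R.
  apply is_lim_seq_incr_1.
  apply (is_lim_seq_ext (fun n => u O + sum_n (fun k => u (S k) - u k) n)%R).
  - intros n. induction n as [|n IH].
    + rewrite sum_O. ring.
    + rewrite sum_Sn, <- Rplus_assoc, IH. unfold plus. simpl. ring.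
  - apply is_lim_seq_plus'; [apply is_lim_seq_const | exact Hl].
Qed.

Lemma qpoch_part_last x p N : qpoch_part x p (S N) = qpoch_part x p N * (1 - x * cpow p N).
Proof. apply prodC_seq_last. Qed.

Lemma qpoch_part_first x p N : qpoch_part x p (S N) = (1 - x) * qpoch_part (p * x) p N.
Proof.
  unfold qpoch_part. simpl. rewrite prodC_seq_shift. f_equal; [ring|].
  apply prodC_ext. intros i _. simpl. ring.
Qed.

Lemma qpoch_part_bound x p N : (Cmod p < 1)%R ->
  (Cmod (qpoch_part x p N) <= exp (Cmod x / (1 - Cmod p)))%R.
Proof.
  intros Hp. set (r := Cmod p) in *. set (X := Cmod x).
  assert (Hr : (0 <= r)%R) by apply Cmod_ge_0. assert (HX : (0 <= X)%R) by apply Cmod_ge_0.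
  apply (Rle_trans _ (exp (X * (1 - r ^ N) / (1 - r)))).
  - induction N as [|N IH].
    + unfold qpoch_part. simpl. rewrite Cmod_1, Rminus_diag, Rmult_0_r, Rdiv_0_l, exp_0. lra.
    + rewrite qpoch_part_last, Cmod_mult.
      assert (Hfac : (Cmod (1 - x * cpow p N) <= exp (X * r ^ N))%R).
      { eapply Rle_trans; [apply Cmod_triangle|].
        rewrite Cmod_1, Cmod_opp, Cmod_mult, Cmod_cpow. apply exp_ineq1_le. }
      eapply Rle_trans.
      { apply Rmult_le_compat; [apply Cmod_ge_0 | apply Cmod_ge_0 | exact IH | exact Hfac]. }
      rewrite <- exp_plus. apply Req_le. f_equal. simpl. field. lra.
  - assert (HrN : (0 <= r ^ N)%R) by (apply pow_le; lra).
    assert (Hle : (X * (1 - r ^ N) / (1 - r) <= X / (1 - r))%R).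
    { unfold Rdiv. apply Rmult_le_compat_r; [apply Rlt_le, Rinv_0_lt_compat; lra | nra]. }
    destruct (Rle_lt_or_eq_dec _ _ Hle) as [Hlt | ->]; [apply Rlt_le, exp_increasing, Hlt | lra].
Qed.

Lemma qpoch_part_cvg x p : (Cmod p < 1)%R ->
  ex_finite_lim_seq (fun N => Re (qpoch_part x p N)) /\
  ex_finite_lim_seq (fun N => Im (qpoch_part x p N)).
Proof.
  intros Hp. set (B := exp (Cmod x / (1 - Cmod p))).
  assert (Hd : forall N, (Cmod (qpoch_part x p (S N) - qpoch_part x p N)
                          <= (B * Cmod x) * Cmod p ^ N)%R).
  { intros N. rewrite qpoch_part_last.
    replace (qpoch_part x p N * (1 - x * cpow p N) - qpoch_part x p N)
      with (- (qpoch_part x p N * x * cpow p N)) by ring.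
    rewrite Cmod_opp, !Cmod_mult, Cmod_cpow, !Rmult_assoc.
    apply Rmult_le_compat_r; [apply Rmult_le_pos; [apply Cmod_ge_0 | apply pow_le, Cmod_ge_0]|].
    apply qpoch_part_bound, Hp. }
  assert (Hr : (0 <= Cmod p < 1)%R) by (split; [apply Cmod_ge_0 | exact Hp]).
  split; apply (ex_finite_lim_seq_geom_increments _ (B * Cmod x) (Cmod p) Hr); intros N;
    eapply Rle_trans; try apply (Hd N).
  - replace (Re (qpoch_part x p (S N)) - Re (qpoch_part x p N))%R
      with (Re (qpoch_part x p (S N) - qpoch_part x p N)) by (unfold Re; simpl; ring).
    apply re_le_Cmod.
  - replace (Im (qpoch_part x p (S N)) - Im (qpoch_part x p N))%R
      with (Im (qpoch_part x p (S N) - qpoch_part x p N)) by (unfold Im; simpl; ring).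
    apply Im_le_Cmod.
Qed.

Lemma qpoch_inf_first x p : (Cmod p < 1)%R -> qpoch_inf x p = (1 - x) * qpoch_inf (p * x) p.
Proof.
  intros Hp. destruct (qpoch_part_cvg (p * x) p Hp) as [[v Hv] [w Hw]].
  set (c := 1 - x).
  assert (HRe : is_lim_seq (fun N => Re (qpoch_part x p N)) (Re c * v - Im c * w)%R).
  { apply is_lim_seq_incr_1.
    apply (is_lim_seq_ext
      (fun N => Re c * Re (qpoch_part (p * x) p N) + (- Im c) * Im (qpoch_part (p * x) p N))%R).
    { intros N. rewrite qpoch_part_first. unfold Re, Im; simpl; ring. }
    replace (Re c * v - Im c * w)%R with (Re c * v + - Im c * w)%R by ring.
    apply is_lim_seq_plus';
      [exact (is_lim_seq_scal_l _ _ _ Hv) | exact (is_lim_seq_scal_l _ _ _ Hw)]. }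
  assert (HIm : is_lim_seq (fun N => Im (qpoch_part x p N)) (Re c * w + Im c * v)%R).
  { apply is_lim_seq_incr_1.
    apply (is_lim_seq_ext
      (fun N => Re c * Im (qpoch_part (p * x) p N) + Im c * Re (qpoch_part (p * x) p N))%R).
    { intros N. rewrite qpoch_part_first. unfold Re, Im; simpl; ring. }
    apply is_lim_seq_plus';
      [exact (is_lim_seq_scal_l _ _ _ Hw) | exact (is_lim_seq_scal_l _ _ _ Hv)]. }
  unfold qpoch_inf.
  rewrite (is_lim_seq_unique _ _ HRe), (is_lim_seq_unique _ _ HIm),
    (is_lim_seq_unique _ _ Hv), (is_lim_seq_unique _ _ Hw).
  apply injective_projections; unfold Re, Im; simpl; ring.
Qed.

Lemma theta_inv p (x : C) : (Cmod p < 1)%R -> x <> 0 -> theta p (/ x) = - / x * theta p x.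
Proof.
  intros Hp Hx. unfold theta. rewrite (qpoch_inf_first (/ x)), (qpoch_inf_first x) by exact Hp.
  replace (p / / x) with (p * x) by (field; exact Hx). unfold Cdiv. field. exact Hx.
Qed.

Lemma qpoch_inf_1 p : qpoch_inf 1 p = 0.
Proof.
  assert (Hz : forall f : C -> R, Lim_seq (fun N => f (qpoch_part 1 p N)) = f 0).
  { intros f. rewrite <- Lim_seq_incr_1, <- (Lim_seq_const (f 0)). apply Lim_seq_ext.
    intros N. rewrite qpoch_part_first. replace (1 - 1) with (RtoC 0) by ring.
    rewrite Cmult_0_l. reflexivity. }
  unfold qpoch_inf. rewrite (Hz Re), (Hz Im). reflexivity.
Qed.

Lemma theta_1 p : theta p 1 = 0.
Proof. unfold theta. rewrite qpoch_inf_1. ring. Qed.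

(** * Partitions and interlacing *)

Lemma part_cons_S (x : nat) l i : (1 <= i)%nat -> part (x :: l) (S i) = part l i.
Proof. intros Hi. unfold part. destruct i; [lia|]. simpl. rewrite Nat.sub_0_r. reflexivity. Qed.

Lemma zpart_cons_S (x : nat) l i : (1 <= i)%nat -> zpart (x :: l) (S i) = zpart l i.
Proof. intros Hi. unfold zpart. rewrite part_cons_S by exact Hi. reflexivity. Qed.

Lemma part_nil i : part [] i = 0%nat.
Proof. unfold part. destruct (i - 1)%nat; reflexivity. Qed.

Lemma part_repeat0 r i : part (repeat 0%nat r) i = 0%nat.
Proof. apply nth_repeat. Qed.

Lemma part_over l i : (length l < i)%nat -> part l i = 0%nat.
Proof. intros H. apply nth_overflow. lia. Qed.

Lemma part_app_repeat0 l r i : part (l ++ repeat 0%nat r) i = part l i.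
Proof.
  unfold part. destruct (Nat.lt_ge_cases (i - 1) (length l)).
  - apply app_nth1. assumption.
  - rewrite app_nth2, nth_repeat, nth_overflow by assumption. reflexivity.
Qed.

Lemma list_eq_parts (l1 l2 : list nat) : length l1 = length l2 ->
  (forall i, (1 <= i)%nat -> part l1 i = part l2 i) -> l1 = l2.
Proof.
  revert l2. induction l1 as [|x l1 IH]; intros [|y l2] Hl H; simpl in Hl; try lia; [reflexivity|].
  f_equal; [apply (H 1%nat); lia|]. apply IH; [lia|].
  intros i Hi. specialize (H (S i) ltac:(lia)). rewrite !part_cons_S in H by lia. exact H.
Qed.

Definition antitone_parts (l : list nat) : Prop :=
  forall i, (1 <= i)%nat -> (part l (S i) <= part l i)%nat.

Lemma is_partition_antitone l : is_partition l -> antitone_parts l.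
Proof.
  intros H i Hi. destruct (Nat.lt_ge_cases i (length l)); [apply H; lia|].
  rewrite (part_over l (S i)) by lia. lia.
Qed.

Lemma antitone_parts_cons x l : antitone_parts (x :: l) ->
  antitone_parts l /\ forall j, (1 <= j)%nat -> (part l j <= x)%nat.
Proof.
  intros H. assert (Hl : antitone_parts l).
  { intros i Hi. specialize (H (S i) ltac:(lia)). rewrite !part_cons_S in H by lia. exact H. }
  split; [exact Hl|]. intros j Hj. induction j as [|j IH]; [lia|].
  destruct j as [|j].
  - specialize (H 1%nat ltac:(lia)). rewrite part_cons_S in H by lia. exact H.
  - specialize (Hl (S j) ltac:(lia)). specialize (IH ltac:(lia)). lia.
Qed.

Lemma antitone_parts_app_repeat0 l r : antitone_parts l -> antitone_parts (l ++ repeat 0%nat r).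
Proof. intros H i Hi. rewrite !part_app_repeat0. apply H, Hi. Qed.

Lemma in_interl_bounds l nu : In nu (interl l) ->
  length nu = length l /\ forall i, (1 <= i)%nat -> (part l (S i) <= part nu i)%nat.
Proof.
  revert nu. induction l as [|x r IH]; intros nu Hin.
  - destruct Hin as [<-|[]]. split; [reflexivity|]. intros. rewrite part_nil. lia.
  - apply in_flat_map in Hin. destruct Hin as [v [Hv Hw]].
    apply in_map_iff in Hw. destruct Hw as [w [<- Hw]]. apply IH in Hw. destruct Hw as [Hl Hw].
    apply in_seq in Hv. split; [simpl; lia|].
    intros [|[|i]] Hi; [lia| |].
    + rewrite part_cons_S by lia. unfold part. destruct r; simpl in *; lia.
    + rewrite !part_cons_S by lia. apply Hw. lia.
Qed.

Lemma in_interl l nu : antitone_parts l -> length nu = length l ->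
  (forall i, (1 <= i <= length l)%nat -> (part l (S i) <= part nu i <= part l i)%nat) ->
  In nu (interl l).
Proof.
  revert nu. induction l as [|x r IH]; intros nu Hd Hl H.
  - destruct nu; simpl in *; [left; reflexivity | lia].
  - destruct nu as [|v w]; simpl in Hl; [lia|].
    apply antitone_parts_cons in Hd. destruct Hd as [Hd _].
    apply in_flat_map. exists v. split.
    + apply in_seq. specialize (H 1%nat ltac:(simpl; lia)).
      rewrite part_cons_S in H by lia. unfold part in H. destruct r; simpl in *; lia.
    + apply in_map, IH; [exact Hd | lia|]. intros i Hi. specialize (H (S i) ltac:(simpl; lia)).
      rewrite !part_cons_S in H by lia. exact H.
Qed.

Lemma NoDup_flat_map_cons {A : Type} (vs : list A) (ws : list (list A)) :
  NoDup vs -> NoDup ws -> NoDup (flat_map (fun v => map (cons v) ws) vs).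
Proof.
  intros Hvs Hws. induction Hvs as [|v vs Hv Hvs IH]; simpl; [constructor|].
  apply NoDup_app; [|exact IH|].
  - apply NoDup_map_NoDup_ForallPairs; [|exact Hws]. intros u w _ _ E. injection E. auto.
  - intros y Hy1 Hy2. apply in_map_iff in Hy1. destruct Hy1 as [w [<- _]].
    apply in_flat_map in Hy2. destruct Hy2 as [v' [Hv' Hw]]. apply in_map_iff in Hw.
    destruct Hw as [w' [E _]]. injection E as <- _. contradiction.
Qed.

Lemma NoDup_interl l : NoDup (interl l).
Proof.
  induction l as [|x r IH]; [repeat constructor; intros []|].
  apply NoDup_flat_map_cons; [apply seq_NoDup | exact IH].
Qed.

Lemma spec_point_length q t l : length (spec_point q t l) = length l.
Proof. unfold spec_point. rewrite length_map, length_seq. reflexivity. Qed.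

Lemma spec_point_cons q t (x : nat) l : spec_point q t (x :: l) =
  zpow q (Z.of_nat x) * zpow t (zn (length l)) :: spec_point q t l.
Proof.
  unfold spec_point. cbn [length seq map]. f_equal.
  - unfold zn. do 2 f_equal. lia.
  - rewrite <- seq_shift, map_map. apply map_ext_in. intros i Hi. apply in_seq in Hi.
    rewrite zpart_cons_S by lia. unfold zn. do 2 f_equal. lia.
Qed.

(** * Elliptic shifted factorials of monomials *)

Lemma esf_of_nat p q c m : esf p q c (Z.of_nat m) = esf_nat p q c m.
Proof. unfold esf. rewrite Nat2Z.id. destruct (Z.leb_spec 0 (Z.of_nat m)); [reflexivity | lia]. Qed.

Lemma esf_0 p q c : esf p q c 0 = 1.
Proof. reflexivity. Qed.

Section Evaluation.
Variables p q t a b : C.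
Hypotheses (Hp : (Cmod p < 1)%R) (Hq : q <> 0) (Ht : t <> 0) (Ha : a <> 0) (Hb : b <> 0).

Definition mon (i j k l : Z) : C := zpow q i * zpow t j * zpow a k * zpow b l.

Definition esfm (i j k l : Z) (m : nat) : C := esf_nat p q (mon i j k l) m.

Definition negmon_prod (i j k l : Z) (m : nat) : C :=
  prodC (seq 0 m) (fun s => - mon (i + Z.of_nat s) j k l).

Ltac solve_mon :=
  unfold mon, mono, zn; zpow_expand; field;
  repeat split; try apply zpow_neq0; assumption.

Lemma mon_neq0 i j k l : mon i j k l <> 0.
Proof. unfold mon. repeat apply Cmult_neq_0; apply zpow_neq0; assumption. Qed.

Lemma mon_mul i j k l i' j' k' l' :
  mon i j k l * mon i' j' k' l' = mon (i + i') (j + j') (k + k') (l + l').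
Proof. solve_mon. Qed.

Lemma mon_inv i j k l : / mon i j k l = mon (- i) (- j) (- k) (- l).
Proof. solve_mon. Qed.

Lemma cpow_mon i j k l n :
  cpow (mon i j k l) n = mon (i * Z.of_nat n) (j * Z.of_nat n) (k * Z.of_nat n) (l * Z.of_nat n).
Proof.
  induction n as [|n IH].
  - change (cpow (mon i j k l) 0) with (RtoC 1). rewrite !Z.mul_0_r. solve_mon.
  - simpl cpow. rewrite IH, mon_mul. f_equal; lia.
Qed.

Lemma esf_as_esfm c z i j k l m :
  c = mon i j k l -> z = Z.of_nat m -> esf p q c z = esfm i j k l m.
Proof. intros -> ->. apply esf_of_nat. Qed.

Lemma esfm_0 i j k l : esfm i j k l 0 = 1.
Proof. reflexivity. Qed.

Lemma esfm_prod i j k l m :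
  esfm i j k l m = prodC (seq 0 m) (fun s => theta p (mon (i + Z.of_nat s) j k l)).
Proof.
  apply prodC_ext. intros s _. f_equal.
  rewrite <- zpow_of_nat. unfold mon. rewrite zpow_add by assumption. ring.
Qed.

Lemma esfm_last i j k l m :
  esfm i j k l (S m) = esfm i j k l m * theta p (mon (i + Z.of_nat m) j k l).
Proof. rewrite !esfm_prod. apply prodC_seq_last. Qed.

Lemma esfm_first i j k l m : esfm i j k l (S m) = theta p (mon i j k l) * esfm (i + 1) j k l m.
Proof.
  rewrite !esfm_prod. simpl. rewrite prodC_seq_shift, Z.add_0_r. f_equal.
  apply prodC_ext. intros s _. do 2 f_equal. lia.
Qed.

Lemma esfm_add i j k l m n :
  esfm i j k l (m + n) = esfm i j k l m * esfm (i + Z.of_nat m) j k l n.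
Proof.
  induction n as [|n IH]; [rewrite Nat.add_0_r, esfm_0; ring|].
  rewrite Nat.add_succ_r, !esfm_last, IH, Nat2Z.inj_add, Z.add_assoc. ring.
Qed.

Hypothesis Hgen : forall i j k l : Z,
  (i, j, k, l) <> (0%Z, 0%Z, 0%Z, 0%Z) -> theta p (mon i j k l) <> 0.

Lemma theta_mon_neq0 i j k l :
  (i <> 0 \/ j <> 0 \/ k <> 0 \/ l <> 0)%Z -> theta p (mon i j k l) <> 0.
Proof. intros H. apply Hgen. intros E. injection E. lia. Qed.

Lemma esfm_neq0 i j k l m :
  (j <> 0 \/ k <> 0 \/ l <> 0 \/ 0 < i \/ i + Z.of_nat m <= 0)%Z -> esfm i j k l m <> 0.
Proof.
  intros H. rewrite esfm_prod. apply prodC_neq0. intros s Hs. apply in_seq in Hs.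
  apply theta_mon_neq0. lia.
Qed.

Lemma esfm_theta_shift i j k l m : theta p (mon i j k l) <> 0 ->
  theta p (mon (i + Z.of_nat m) j k l) / theta p (mon i j k l) * esfm i j k l m
  = esfm (i + 1) j k l m.
Proof.
  intros H. transitivity (esfm i j k l (S m) / theta p (mon i j k l)).
  - rewrite esfm_last. field. exact H.
  - rewrite esfm_first. field. exact H.
Qed.

Lemma negmon_prod_neq0 i j k l m : negmon_prod i j k l m <> 0.
Proof.
  apply prodC_neq0. intros s _ H. apply (mon_neq0 (i + Z.of_nat s) j k l).
  replace (mon (i + Z.of_nat s) j k l) with (- - mon (i + Z.of_nat s) j k l) by ring.
  rewrite H. ring.
Qed.

Lemma negmon_prod_0 i j k l : negmon_prod i j k l 0 = 1.
Proof. reflexivity. Qed.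

Lemma negmon_prod_last i j k l m :
  negmon_prod i j k l (S m) = negmon_prod i j k l m * - mon (i + Z.of_nat m) j k l.
Proof. apply prodC_seq_last. Qed.

Lemma negmon_prod_add i j k l m n :
  negmon_prod i j k l (m + n) = negmon_prod i j k l m * negmon_prod (i + Z.of_nat m) j k l n.
Proof.
  induction n as [|n IH]; [rewrite Nat.add_0_r, negmon_prod_0; ring|].
  rewrite Nat.add_succ_r, !negmon_prod_last, IH, Nat2Z.inj_add, Z.add_assoc. ring.
Qed.

Lemma negmon_prod_split i j k l m : negmon_prod i j k l m =
  negmon_prod i 0 0 0 m * mon 0 (j * Z.of_nat m) (k * Z.of_nat m) (l * Z.of_nat m).
Proof.
  induction m as [|m IH]; [rewrite !negmon_prod_0, !Z.mul_0_r; solve_mon|].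
  rewrite !negmon_prod_last, IH.
  replace (mon (i + Z.of_nat m) j k l) with (mon (i + Z.of_nat m) 0 0 0 * mon 0 j k l)
    by (rewrite mon_mul; f_equal; lia).
  replace (mon 0 (j * Z.of_nat (S m)) (k * Z.of_nat (S m)) (l * Z.of_nat (S m)))
    with (mon 0 (j * Z.of_nat m) (k * Z.of_nat m) (l * Z.of_nat m) * mon 0 j k l)
    by (rewrite mon_mul; f_equal; lia).
  ring.
Qed.

Lemma negmon_prod_shift i j k l m :
  negmon_prod i j k l m = negmon_prod (i + 1) j k l m * cpow (mon (-1) 0 0 0) m.
Proof.
  induction m as [|m IH]; [rewrite !negmon_prod_0; simpl; ring|].
  rewrite !negmon_prod_last, IH. simpl cpow.
  replace (mon (i + Z.of_nat m) j k l) with (mon (i + 1 + Z.of_nat m) j k l * mon (-1) 0 0 0)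
    by (rewrite mon_mul; f_equal; lia).
  ring.
Qed.

Lemma esfm_reflect i j k l m :
  esfm i j k l m = negmon_prod i j k l m * esfm (1 - i - Z.of_nat m) (- j) (- k) (- l) m.
Proof.
  induction m as [|m IH]; [rewrite negmon_prod_0, !esfm_0; ring|].
  rewrite esfm_last, negmon_prod_last, IH, esfm_first.
  assert (Hrefl : forall c : C, c <> 0 -> theta p c = - c * theta p (/ c)).
  { intros c Hc. rewrite theta_inv by assumption. field. assumption. }
  rewrite (Hrefl _ (mon_neq0 _ _ _ _)), mon_inv.
  replace (1 - i - Z.of_nat (S m) + 1)%Z with (1 - i - Z.of_nat m)%Z by lia.
  replace (- (i + Z.of_nat m))%Z with (1 - i - Z.of_nat (S m))%Z by lia. ring.
Qed.

(** * The right-hand side *)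

Definition rhs_single (n k : nat) (A : Z) : C :=
  esf p q (q * b * zpow t (zn n - zn k)) A
  * esf p q (q * zpow t (zn n - zn k)) A
  * esf p q (a * zpow t (2 * zn n - 2 * zn k)) (2 * A)
  / (esf p q (a / b * zpow t (zn n - zn k)) A
     * esf p q (a * zpow t (zn n - zn k)) A
     * esf p q (q * b * zpow t (zn n + 1 - 2 * zn k)) (2 * A))
  * zpow t ((zn n + 1 - 2 * zn k) * A).

Definition rhs_pair (n i j : nat) (Ai Aj : Z) : C :=
  esf p q (q * zpow t (zn j - zn i - 1)) (Ai - Aj)
  * esf p q (a * zpow t (2 * zn n - zn i - zn j)) (Ai + Aj)
  / (esf p q (q * zpow t (zn j - zn i)) (Ai - Aj)
     * esf p q (a * zpow t (1 + 2 * zn n - zn i - zn j)) (Ai + Aj)).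

Definition rhs_singles (l : list nat) : C :=
  prodC (seq 1 (length l)) (fun k => rhs_single (length l) k (zpart l k)).

Definition rhs_pairs (l : list nat) : C :=
  prodC (seq 1 (length l)) (fun i => prodC (seq (S i) (length l - i))
    (fun j => rhs_pair (length l) i j (zpart l i) (zpart l j))).

Definition rhs (l : list nat) : C := rhs_singles l * cpow (a / (q * b)) (psize l) * rhs_pairs l.

Lemma rhs_single_esfm n k (A : nat) u w v :
  u = (zn n - zn k)%Z -> w = (2 * zn n - 2 * zn k)%Z -> v = (zn n + 1 - 2 * zn k)%Z ->
  rhs_single n k (Z.of_nat A) =
  esfm 1 u 0 1 A * esfm 1 u 0 0 A * esfm 0 w 1 0 (2 * A)
  / (esfm 0 u 1 (-1) A * esfm 0 u 1 0 A * esfm 1 v 0 1 (2 * A)) * zpow t (v * Z.of_nat A).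
Proof.
  intros -> -> ->. unfold rhs_single.
  repeat f_equal; apply esf_as_esfm; solve [solve_mon | lia].
Qed.

Lemma rhs_single_succ n k (A : nat) : rhs_single (S n) (S k) (Z.of_nat A) =
  rhs_single n k (Z.of_nat A)
  * (esfm 1 (Z.of_nat n + 1 - 2 * Z.of_nat k) 0 1 (2 * A)
     / esfm 1 (Z.of_nat n - 2 * Z.of_nat k) 0 1 (2 * A))
  * zpow t (- Z.of_nat A).
Proof.
  set (u := (Z.of_nat n - Z.of_nat k)%Z). set (w := (2 * Z.of_nat n - 2 * Z.of_nat k)%Z).
  rewrite (rhs_single_esfm (S n) (S k) A u w (Z.of_nat n - 2 * Z.of_nat k)) by (unfold zn; lia).
  rewrite (rhs_single_esfm n k A u w (Z.of_nat n + 1 - 2 * Z.of_nat k)) by (unfold zn; lia).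
  replace ((Z.of_nat n - 2 * Z.of_nat k) * Z.of_nat A)%Z
    with ((Z.of_nat n + 1 - 2 * Z.of_nat k) * Z.of_nat A + - Z.of_nat A)%Z by ring.
  rewrite zpow_add by assumption.
  field. repeat split; apply esfm_neq0; lia.
Qed.

Lemma rhs_pair_succ n i j (Ai Aj : Z) : rhs_pair (S n) (S i) (S j) Ai Aj = rhs_pair n i j Ai Aj.
Proof.
  unfold rhs_pair, zn. rewrite !Nat2Z.inj_succ.
  replace (Z.succ (Z.of_nat j) - Z.succ (Z.of_nat i))%Z with (Z.of_nat j - Z.of_nat i)%Z by lia.
  replace (2 * Z.succ (Z.of_nat n) - Z.succ (Z.of_nat i) - Z.succ (Z.of_nat j))%Z
    with (2 * Z.of_nat n - Z.of_nat i - Z.of_nat j)%Z by lia.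
  replace (1 + 2 * Z.succ (Z.of_nat n) - Z.succ (Z.of_nat i) - Z.succ (Z.of_nat j))%Z
    with (1 + 2 * Z.of_nat n - Z.of_nat i - Z.of_nat j)%Z by lia.
  reflexivity.
Qed.

Lemma rhs_pair_first_row n (x B : nat) j : (B <= x)%nat ->
  rhs_pair (S n) 1 (S j) (Z.of_nat x) (Z.of_nat B) =
  esfm 1 (Z.of_nat j - 1) 0 0 (x - B) * esfm 0 (2 * Z.of_nat n - Z.of_nat j) 1 0 (x + B)
  / (esfm 1 (Z.of_nat j) 0 0 (x - B) * esfm 0 (2 * Z.of_nat n + 1 - Z.of_nat j) 1 0 (x + B)).
Proof.
  intros HB. unfold rhs_pair.
  replace (zn (S j) - zn 1 - 1)%Z with (Z.of_nat j - 1)%Z by (unfold zn; lia).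
  replace (zn (S j) - zn 1)%Z with (Z.of_nat j) by (unfold zn; lia).
  replace (2 * zn (S n) - zn 1 - zn (S j))%Z with (2 * Z.of_nat n - Z.of_nat j)%Z
    by (unfold zn; lia).
  replace (1 + 2 * zn (S n) - zn 1 - zn (S j))%Z with (2 * Z.of_nat n + 1 - Z.of_nat j)%Z
    by (unfold zn; lia).
  repeat f_equal; apply esf_as_esfm; solve [solve_mon | lia].
Qed.

Lemma rhs_singles_cons x l : rhs_singles (x :: l) =
  rhs_single (S (length l)) 1 (Z.of_nat x)
  * prodC (seq 1 (length l)) (fun k => rhs_single (S (length l)) (S k) (zpart l k)).
Proof.
  unfold rhs_singles. cbn [length]. rewrite prodC_seq1_first. f_equal.
  apply prodC_ext. intros k Hk. apply in_seq in Hk. rewrite zpart_cons_S by lia. reflexivity.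
Qed.

Lemma rhs_pairs_cons x l : rhs_pairs (x :: l) =
  prodC (seq 1 (length l)) (fun j => rhs_pair (S (length l)) 1 (S j) (Z.of_nat x) (zpart l j))
  * rhs_pairs l.
Proof.
  unfold rhs_pairs. cbn [length]. rewrite prodC_seq1_first, Nat.sub_1_r. simpl Nat.pred.
  f_equal.
  - rewrite prodC_seq_shift. apply prodC_ext. intros j Hj. apply in_seq in Hj.
    rewrite (zpart_cons_S x l j) by lia. reflexivity.
  - apply prodC_ext. intros i Hi. apply in_seq in Hi.
    rewrite Nat.sub_succ, prodC_seq_shift. apply prodC_ext. intros j Hj. apply in_seq in Hj.
    rewrite !zpart_cons_S, rhs_pair_succ by lia. reflexivity.
Qed.

(** * One step of the branching rule *)

Section OneStep.
Variables (x : nat) (mu : list nat).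
Hypothesis Hmono : antitone_parts (x :: mu).

Local Notation K := (length mu).
Local Notation zK := (Z.of_nat (length mu)).
Local Notation zx := (Z.of_nat x).
Local Notation lam := (part (x :: mu)).

Lemma lam_le_x i : (1 <= i)%nat -> (lam i <= x)%nat.
Proof.
  intros Hi. destruct i as [|[|i]]; [lia | reflexivity|].
  rewrite part_cons_S by lia. apply (antitone_parts_cons x mu Hmono). lia.
Qed.

Lemma lam_over i : (K + 2 <= i)%nat -> lam i = 0%nat.
Proof. intros Hi. apply part_over. simpl. lia. Qed.

(* [x :: mu] plays [lambda] and [mu] the interlacing partition [nu].  Evaluating [W_{lambda/nu}]
   at [X = q^x], with [a t^(2K)] and [b t^K] in place of [a] and [b], its elliptic factorials
   become products of the factorials of monomials below, named after their arguments [1/X],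
   [a X], [q b X / t], [q b / (a X t)], [q b X] and [q b / (a X)]. *)
Definition fac_xinv i :=
  esfm (Z.of_nat (lam (S i)) - zx) (1 - Z.of_nat i) 0 0 (lam i - lam (S i)).
Definition fac_ax i :=
  esfm (zx + Z.of_nat (lam (S i))) (2 * zK + 1 - Z.of_nat i) 1 0 (lam i - lam (S i)).
Definition fac_qbx_t i := esfm (1 + zx) (zK - Z.of_nat i) 0 1 (lam (S i)).
Definition fac_qb_axt i := esfm (1 - zx) (- zK - Z.of_nat i) (-1) 1 (lam (S i)).
Definition fac_qbx i := esfm (1 + zx) (zK + 1 - Z.of_nat i) 0 1 (lam i).
Definition fac_qb_ax i := esfm (1 - zx) (1 - zK - Z.of_nat i) (-1) 1 (lam i).

Definition skew_main : C :=
  prodC (seq 1 (S K)) fac_xinv * prodC (seq 1 (S K)) fac_ax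
  * prodC (seq 1 K) fac_qbx_t * prodC (seq 1 K) fac_qb_axt
  / (prodC (seq 1 (S K)) fac_qbx * prodC (seq 1 (S K)) fac_qb_ax).

Definition fac_a_lam i := esfm 0 (2 * zK + 1 - Z.of_nat i) 1 0 (x + lam i).
Definition fac_a_mu i := esfm 0 (2 * zK + 1 - Z.of_nat i) 1 0 (x + lam (S i)).
Definition fac_q_lam i := esfm 1 (Z.of_nat i - 1) 0 0 (x - lam i).
Definition fac_q_mu i := esfm 1 (Z.of_nat i - 1) 0 0 (x - lam (S i)).
Definition negq_prod m := negmon_prod (- zx) 0 0 0 m.

Lemma fac_a_mu_neq0 i : fac_a_mu i <> 0.
Proof. unfold fac_a_mu. apply esfm_neq0. lia. Qed.

Lemma fac_q_lam_neq0 i : fac_q_lam i <> 0.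
Proof. unfold fac_q_lam. apply esfm_neq0. lia. Qed.

Lemma prod_fac_qbx : prodC (seq 1 (S K)) fac_qbx = fac_qbx 1 * prodC (seq 1 K) fac_qbx_t.
Proof.
  rewrite prodC_seq1_first. f_equal. apply prodC_ext. intros i _.
  unfold fac_qbx, fac_qbx_t. f_equal. lia.
Qed.

Lemma prod_fac_qb_ax : prodC (seq 1 (S K)) fac_qb_ax = fac_qb_ax 1 * prodC (seq 1 K) fac_qb_axt.
Proof.
  rewrite prodC_seq1_first. f_equal. apply prodC_ext. intros i _.
  unfold fac_qb_ax, fac_qb_axt. f_equal. lia.
Qed.

Lemma prod_fac_ax : prodC (seq 1 (S K)) fac_ax =
  fac_a_lam 1 * prodC (seq 1 K) (fun j => fac_a_lam (S j) / fac_a_mu j) / fac_a_mu (S K).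
Proof.
  rewrite (prodC_ext _ fac_ax (fun i => fac_a_lam i / fac_a_mu i)).
  - rewrite !prodC_div, prodC_seq1_first, prodC_seq_last. simpl Nat.add.
    assert (Hprod : prodC (seq 1 K) fac_a_mu <> 0)
      by (apply prodC_neq0; intros; apply fac_a_mu_neq0).
    field. split; [exact Hprod | apply fac_a_mu_neq0].
  - intros i Hi. apply in_seq in Hi. assert (Hle := Hmono i ltac:(lia)).
    transitivity (fac_a_mu i * fac_ax i / fac_a_mu i); [field; apply fac_a_mu_neq0|].
    f_equal. unfold fac_a_lam, fac_a_mu, fac_ax.
    replace (x + lam i)%nat with ((x + lam (S i)) + (lam i - lam (S i)))%nat by lia.
    rewrite (esfm_add _ _ _ _ (x + lam (S i))). do 2 f_equal. lia.
Qed.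

Lemma fac_xinv_reflect i : (1 <= i)%nat -> fac_xinv i =
  negmon_prod (Z.of_nat (lam (S i)) - zx) (1 - Z.of_nat i) 0 0 (lam i - lam (S i))
  * (fac_q_mu i / fac_q_lam i).
Proof.
  intros Hi. assert (HBA := Hmono i Hi). assert (HAx := lam_le_x i Hi).
  unfold fac_xinv. rewrite esfm_reflect. f_equal.
  transitivity (esfm (1 + Z.of_nat (x - lam i)) (Z.of_nat i - 1) 0 0 (lam i - lam (S i)));
    [f_equal; lia|].
  unfold fac_q_mu, fac_q_lam.
  replace (x - lam (S i))%nat with ((x - lam i) + (lam i - lam (S i)))%nat by lia.
  rewrite (esfm_add _ _ _ _ (x - lam i)). field. apply esfm_neq0. lia.
Qed.

Lemma prod_fac_xinv : prodC (seq 1 (S K)) fac_xinv =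
  prodC (seq 1 (S K))
    (fun i => negmon_prod (Z.of_nat (lam (S i)) - zx) (1 - Z.of_nat i) 0 0 (lam i - lam (S i)))
  * (prodC (seq 1 K) (fun j => fac_q_mu j / fac_q_lam (S j)) * fac_q_mu (S K)).
Proof.
  rewrite (prodC_ext _ fac_xinv (fun i =>
    negmon_prod (Z.of_nat (lam (S i)) - zx) (1 - Z.of_nat i) 0 0 (lam i - lam (S i))
    * (fac_q_mu i / fac_q_lam i))).
  2: { intros i Hi. apply in_seq in Hi. apply fac_xinv_reflect. lia. }
  rewrite prodC_mult. f_equal. rewrite !prodC_div, prodC_seq_last, prodC_seq1_first. simpl Nat.add.
  replace (fac_q_lam 1) with (RtoC 1) by (unfold fac_q_lam; rewrite Nat.sub_diag; reflexivity).
  assert (Hprod : prodC (seq 1 K) (fun j => fac_q_lam (S j)) <> 0)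
    by (apply prodC_neq0; intros; apply fac_q_lam_neq0).
  field. exact Hprod.
Qed.

Definition t_weight i := zpow t ((1 - Z.of_nat i) * Z.of_nat (lam i)).

Lemma negmon_xinv_telescoping i : (1 <= i)%nat ->
  negmon_prod (Z.of_nat (lam (S i)) - zx) (1 - Z.of_nat i) 0 0 (lam i - lam (S i)) =
  negq_prod (lam i) / negq_prod (lam (S i))
  * (t_weight i / t_weight (S i) * zpow t (- Z.of_nat (lam (S i)))).
Proof.
  intros Hi. assert (HBA := Hmono i Hi).
  rewrite negmon_prod_split. f_equal.
  - transitivity (negq_prod (lam (S i))
      * negmon_prod (Z.of_nat (lam (S i)) - zx) 0 0 0 (lam i - lam (S i))
      / negq_prod (lam (S i))); [field; apply negmon_prod_neq0|].
    f_equal. unfold negq_prod.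
    replace (Z.of_nat (lam (S i)) - zx)%Z with (- zx + Z.of_nat (lam (S i)))%Z by lia.
    rewrite <- negmon_prod_add. f_equal. lia.
  - unfold t_weight, mon. rewrite <- zpow_sub, <- zpow_add by assumption.
    rewrite !Z.mul_0_l, !zpow_0.
    rewrite Cmult_1_l, !Cmult_1_r. f_equal.
    rewrite Nat2Z.inj_sub, Nat2Z.inj_succ by lia. ring.
Qed.

Lemma prod_negmon_xinv :
  prodC (seq 1 (S K))
    (fun i => negmon_prod (Z.of_nat (lam (S i)) - zx) (1 - Z.of_nat i) 0 0 (lam i - lam (S i)))
  = negq_prod x * prodC (seq 1 K) (fun m => zpow t (- Z.of_nat (lam (S m)))).
Proof.
  rewrite (prodC_ext _ _ (fun i => negq_prod (lam i) / negq_prod (lam (S i))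
             * (t_weight i / t_weight (S i) * zpow t (- Z.of_nat (lam (S i)))))).
  2: { intros i Hi. apply in_seq in Hi. apply negmon_xinv_telescoping. lia. }
  rewrite !prodC_mult, !(prodC_telescope (fun i => negq_prod (lam i)))
    by (intros; apply negmon_prod_neq0).
  rewrite (prodC_telescope t_weight) by (intros; apply zpow_neq0; assumption).
  rewrite (prodC_seq_last 1 K). simpl Nat.add. unfold t_weight.
  change (lam 1) with x. rewrite (lam_over (S (S K))) by lia.
  replace (negq_prod 0) with (RtoC 1) by reflexivity.
  rewrite !Z.mul_0_r, Z.sub_diag, Z.mul_0_l, !zpow_0. simpl. field.
Qed.

Lemma negq_prod_eq : negq_prod x =
  negmon_prod (1 - zx) (- zK) (-1) 1 x * zpow t (zK * zx) * cpow (a / (q * b)) x.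
Proof.
  unfold negq_prod. rewrite negmon_prod_shift, (negmon_prod_split (1 - zx)).
  replace (- zx + 1)%Z with (1 - zx)%Z by lia.
  replace (a / (q * b)) with (mon (-1) 0 1 (-1)) by solve_mon.
  replace (zpow t (zK * zx)) with (mon 0 (zK * zx) 0 0) by solve_mon.
  rewrite !cpow_mon, <- !Cmult_assoc, !mon_mul. do 2 f_equal; lia.
Qed.

Lemma rhs_pair_first_row_fac j : (1 <= j)%nat ->
  rhs_pair (S K) 1 (S j) zx (zpart mu j) =
  fac_q_mu j / fac_q_lam (S j) * (fac_a_lam (S j) / fac_a_mu j).
Proof.
  intros Hj. assert (HB := lam_le_x (S j) ltac:(lia)). rewrite part_cons_S in HB by exact Hj.
  unfold zpart. rewrite rhs_pair_first_row by exact HB. rewrite Cdiv_mult.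
  unfold fac_q_mu, fac_q_lam, fac_a_lam, fac_a_mu. rewrite (part_cons_S x mu j) by exact Hj.
  do 3 f_equal; lia.
Qed.

Lemma rhs_single_first : rhs_single (S K) 1 zx =
  fac_q_mu (S K) * fac_a_lam 1 * negmon_prod (1 - zx) (- zK) (-1) 1 x
  / (fac_qb_ax 1 * fac_a_mu (S K) * fac_qbx 1) * zpow t (zK * zx).
Proof.
  rewrite (rhs_single_esfm (S K) 1 x zK (2 * zK) zK) by (unfold zn; lia).
  assert (Hqbx : esfm 1 zK 0 1 (2 * x) = esfm 1 zK 0 1 x * fac_qbx 1).
  { unfold fac_qbx. change (lam 1) with x.
    replace (2 * x)%nat with (x + x)%nat by lia. rewrite esfm_add.
    f_equal. f_equal; lia. }
  assert (Hqb_ax : fac_qb_ax 1 = negmon_prod (1 - zx) (- zK) (-1) 1 x * esfm 0 zK 1 (-1) x).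
  { unfold fac_qb_ax. change (lam 1) with x. rewrite esfm_reflect. f_equal; f_equal; lia. }
  assert (Hq_mu : fac_q_mu (S K) = esfm 1 zK 0 0 x).
  { unfold fac_q_mu. rewrite lam_over by lia. f_equal; lia. }
  assert (Ha_lam : fac_a_lam 1 = esfm 0 (2 * zK) 1 0 (2 * x)).
  { unfold fac_a_lam. change (lam 1) with x. f_equal; lia. }
  assert (Ha_mu : fac_a_mu (S K) = esfm 0 zK 1 0 x).
  { unfold fac_a_mu. rewrite lam_over by lia. f_equal; lia. }
  rewrite Hqbx, Hqb_ax, Hq_mu, Ha_lam, Ha_mu.
  field. repeat split; try apply negmon_prod_neq0; try (unfold fac_qbx); apply esfm_neq0; lia.
Qed.

Lemma skew_main_eq : skew_main =
  rhs_single (S K) 1 zx * cpow (a / (q * b)) x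
  * prodC (seq 1 K) (fun j => rhs_pair (S K) 1 (S j) zx (zpart mu j))
  * prodC (seq 1 K) (fun m => zpow t (- zpart mu m)).
Proof.
  unfold skew_main.
  rewrite prod_fac_qbx, prod_fac_qb_ax, prod_fac_xinv, prod_fac_ax, prod_negmon_xinv,
    negq_prod_eq, rhs_single_first.
  rewrite (prodC_ext _ (fun j => rhs_pair _ _ _ _ _)
             (fun j => fac_q_mu j / fac_q_lam (S j) * (fac_a_lam (S j) / fac_a_mu j))).
  2: { intros j Hj. apply in_seq in Hj. apply rhs_pair_first_row_fac. lia. }
  rewrite (prodC_ext _ (fun m => zpow t (- zpart mu m))
             (fun m => zpow t (- Z.of_nat (lam (S m))))).
  2: { intros m Hm. apply in_seq in Hm. rewrite part_cons_S by lia. reflexivity. }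
  rewrite !prodC_mult, !prodC_div.
  assert (Hqbx_t : prodC (seq 1 K) fac_qbx_t <> 0)
    by (apply prodC_neq0; intros; unfold fac_qbx_t; apply esfm_neq0; lia).
  assert (Hqb_axt : prodC (seq 1 K) fac_qb_axt <> 0)
    by (apply prodC_neq0; intros; unfold fac_qb_axt; apply esfm_neq0; lia).
  assert (Hq_lam : prodC (seq 1 K) (fun j => fac_q_lam (S j)) <> 0)
    by (apply prodC_neq0; intros; apply fac_q_lam_neq0).
  assert (Ha_mu : prodC (seq 1 K) fac_a_mu <> 0)
    by (apply prodC_neq0; intros; apply fac_a_mu_neq0).
  assert (Hqbx : fac_qbx 1 <> 0) by (unfold fac_qbx; apply esfm_neq0; lia).
  assert (Hqb_ax : fac_qb_ax 1 <> 0) by (unfold fac_qb_ax; apply esfm_neq0; lia).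
  assert (Ha_mu_K := fac_a_mu_neq0 (S K)).
  field. repeat split; assumption.
Qed.

Variable r : nat.

Local Notation L := ((x :: mu) ++ repeat 0%nat r).
Local Notation M := (mu ++ repeat 0%nat (S r)).
Local Notation X := (zpow q zx).
Local Notation a' := (a * zpow t (2 * zn (length mu))).
Local Notation b' := (b * zpow t (zn (length mu))).

Lemma length_L : length L = (S K + r)%nat.
Proof. rewrite length_app, repeat_length. reflexivity. Qed.

Lemma length_M : length M = (S K + r)%nat.
Proof. rewrite length_app, repeat_length. simpl. lia. Qed.

Lemma zpart_L i : zpart L i = Z.of_nat (lam i).
Proof. unfold zpart. rewrite part_app_repeat0. reflexivity. Qed.

Lemma zpart_M i : (1 <= i)%nat -> zpart M i = Z.of_nat (lam (S i)).
Proof. intros Hi. unfold zpart. rewrite part_app_repeat0, part_cons_S by exact Hi. reflexivity. Qed.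

Lemma interlaceb_L_M : interlaceb L M = true.
Proof.
  apply andb_true_iff. split; [apply Nat.eqb_eq; rewrite length_L, length_M; reflexivity|].
  apply forallb_forall. intros i Hi. apply in_seq in Hi. apply andb_true_iff.
  rewrite !part_app_repeat0, !part_cons_S by lia.
  split; apply Nat.leb_le; [|lia].
  assert (H := Hmono i ltac:(lia)). rewrite part_cons_S in H by lia. exact H.
Qed.

Lemma zpart_M_pred j : (2 <= j)%nat -> zpart M (j - 1) = zpart L j.
Proof.
  intros Hj. rewrite zpart_L, zpart_M by lia. do 3 f_equal. lia.
Qed.

Lemma Hfac_L_M c : Hfac q p t c L M = 1.
Proof.
  unfold Hfac. cbv zeta.
  rewrite !prodC_eq1; [ring| |]; intros i Hi; apply in_seq in Hi;
    apply prodC_eq1; intros j Hj; apply in_seq in Hj;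
    rewrite zpart_M_pred, Z.sub_diag, !esf_0 by lia; field.
Qed.

Lemma esf_ratio_xinv : esf_ratio q p t (/ X) L M = prodC (seq 1 (S K)) fac_xinv.
Proof.
  unfold esf_ratio. rewrite length_L. apply prodC_seq_trim; [lia| |]; intros i Hi;
    rewrite zpart_L, zpart_M by lia.
  - rewrite !lam_over, Z.sub_diag by lia. apply esf_0.
  - assert (H := Hmono i ltac:(lia)). unfold fac_xinv. apply esf_as_esfm; [solve_mon | lia].
Qed.

Lemma esf_ratio_ax : esf_ratio q p t (a' * X) L M = prodC (seq 1 (S K)) fac_ax.
Proof.
  unfold esf_ratio. rewrite length_L. apply prodC_seq_trim; [lia| |]; intros i Hi;
    rewrite zpart_L, zpart_M by lia.
  - rewrite !lam_over, Z.sub_diag by lia. apply esf_0.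
  - assert (H := Hmono i ltac:(lia)). unfold fac_ax. apply esf_as_esfm; [solve_mon | lia].
Qed.

Lemma esf_part_qbx_t : esf_part q p t (q * b' * X / t) M = prodC (seq 1 K) fac_qbx_t.
Proof.
  unfold esf_part. rewrite length_M. apply prodC_seq_trim; [lia| |]; intros i Hi;
    rewrite zpart_M by lia.
  - rewrite lam_over by lia. apply esf_0.
  - unfold fac_qbx_t. apply esf_as_esfm; [solve_mon | reflexivity].
Qed.

Lemma esf_part_qb_axt : esf_part q p t (q * b' / (a' * X * t)) M = prodC (seq 1 K) fac_qb_axt.
Proof.
  unfold esf_part. rewrite length_M. apply prodC_seq_trim; [lia| |]; intros i Hi;
    rewrite zpart_M by lia.
  - rewrite lam_over by lia. apply esf_0.
  - unfold fac_qb_axt. apply esf_as_esfm; [solve_mon | reflexivity].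
Qed.

Lemma esf_part_qbx : esf_part q p t (q * b' * X) L = prodC (seq 1 (S K)) fac_qbx.
Proof.
  unfold esf_part. rewrite length_L. apply prodC_seq_trim; [lia| |]; intros i Hi;
    rewrite zpart_L.
  - rewrite lam_over by lia. apply esf_0.
  - unfold fac_qbx. apply esf_as_esfm; [solve_mon | reflexivity].
Qed.

Lemma esf_part_qb_ax : esf_part q p t (q * b' / (a' * X)) L = prodC (seq 1 (S K)) fac_qb_ax.
Proof.
  unfold esf_part. rewrite length_L. apply prodC_seq_trim; [lia| |]; intros i Hi;
    rewrite zpart_L.
  - rewrite lam_over by lia. apply esf_0.
  - unfold fac_qb_ax. apply esf_as_esfm; [solve_mon | reflexivity].
Qed.

Definition theta_fac i :=
  esfm 1 (zK + 1 - 2 * Z.of_nat i) 0 1 (2 * lam (S i))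
  / esfm 1 (zK - 2 * Z.of_nat i) 0 1 (2 * lam (S i)).

Lemma theta_product_L_M : prodC (seq 1 (length L)) (fun i =>
    theta p (mono q t b' (2 * zpart M i) (1 - 2 * zn i)) / theta p (mono q t b' 0 (1 - 2 * zn i))
    * esf p q (mono q t b' 0 (1 - 2 * zn i)) (zpart M i + zpart L (S i))
    / esf p q (mono q t b' 1 (- 2 * zn i)) (zpart M i + zpart L (S i))
    * zpow t (zn i * (zpart M i - zpart L (S i))))
  = prodC (seq 1 K) theta_fac.
Proof.
  rewrite length_L, (prodC_ext _ _ theta_fac).
  - apply prodC_seq_trim; [lia| |reflexivity]. intros i Hi. unfold theta_fac.
    rewrite lam_over by lia. rewrite !esfm_0. field.
  - intros i Hi. apply in_seq in Hi. rewrite zpart_M, zpart_L, Z.sub_diag, Z.mul_0_r, zpow_0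
      by lia.
    set (B := lam (S i)).
    rewrite (esf_as_esfm _ _ 0 (zK + 1 - 2 * Z.of_nat i) 0 1 (2 * B)) by (solve_mon || lia).
    rewrite (esf_as_esfm _ _ 1 (zK - 2 * Z.of_nat i) 0 1 (2 * B)) by (solve_mon || lia).
    replace (mono q t b' (2 * Z.of_nat B) (1 - 2 * zn i))
      with (mon (0 + Z.of_nat (2 * B)) (zK + 1 - 2 * Z.of_nat i) 0 1)
      by (rewrite Nat2Z.inj_mul; solve_mon).
    replace (mono q t b' 0 (1 - 2 * zn i)) with (mon 0 (zK + 1 - 2 * Z.of_nat i) 0 1)
      by solve_mon.
    rewrite esfm_theta_shift by (apply theta_mon_neq0; lia).
    rewrite Z.add_0_l. unfold theta_fac, B. ring.
Qed.

Lemma W1_L_M : W1 q p t a' b' X L M = skew_main * prodC (seq 1 K) theta_fac.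
Proof.
  unfold W1. rewrite interlaceb_L_M. cbv zeta.
  rewrite Hfac_L_M, esf_ratio_xinv, esf_ratio_ax, esf_part_qbx_t, esf_part_qb_axt,
    esf_part_qbx, esf_part_qb_ax, theta_product_L_M.
  unfold skew_main, Cdiv. ring.
Qed.

Lemma W1_mul_rhs : W1 q p t a' b' X L M * rhs mu = rhs (x :: mu).
Proof.
  rewrite W1_L_M, skew_main_eq. unfold rhs.
  rewrite rhs_singles_cons, rhs_pairs_cons.
  change (psize (x :: mu)) with (x + psize mu)%nat. rewrite cpow_add.
  rewrite (prodC_ext _ (fun k => rhs_single (S K) (S k) (zpart mu k))
    (fun k => rhs_single K k (zpart mu k) * theta_fac k * zpow t (- zpart mu k))).
  2: { intros k Hk. apply in_seq in Hk. unfold zpart, theta_fac.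
       rewrite rhs_single_succ, (part_cons_S x mu k) by lia. reflexivity. }
  rewrite !prodC_mult. unfold rhs_singles. ring.
Qed.

End OneStep.

(** * Evaluation at [q^lambda t^delta] *)

Lemma Wskew_spec_point_cons (x : nat) mu nu ka : Wskew q p t (spec_point q t (x :: mu)) a b nu ka =
  sumC (interl nu) (fun rho =>
    W1 q p t (a * zpow t (2 * zn (length mu))) (b * zpow t (zn (length mu)))
      (zpow q (Z.of_nat x)) nu rho
    * Wskew q p t (spec_point q t mu) a b rho ka).
Proof.
  rewrite spec_point_cons. cbn [Wskew]. rewrite spec_point_length, zpow_opp by assumption.
  replace (zpow q (Z.of_nat x) * zpow t (zn (length mu)) * / zpow t (zn (length mu)))
    with (zpow q (Z.of_nat x)) by (field; apply zpow_neq0; assumption).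
  reflexivity.
Qed.

Lemma W1_vanish a0 b0 (y : nat) nu ka : (part ka 1 <= y < part nu 1)%nat ->
  W1 q p t a0 b0 (zpow q (Z.of_nat y)) nu ka = 0.
Proof.
  intros [H1 H2].
  assert (Hratio : esf_ratio q p t (/ zpow q (Z.of_nat y)) nu ka = 0).
  { unfold esf_ratio. apply (prodC_eq0 _ _ 1%nat).
    { apply in_seq. destruct nu; [rewrite part_nil in H2; lia | simpl; lia]. }
    unfold zpart. rewrite <- Nat2Z.inj_sub, esf_of_nat by lia.
    apply (prodC_eq0 _ _ (y - part ka 1)%nat); [apply in_seq; lia|].
    rewrite <- theta_1 with p. f_equal.
    simpl (1 - zn 1)%Z. rewrite zpow_0, !zpow_of_nat.
    replace y with (part ka 1 + (y - part ka 1))%nat at 1 by lia. rewrite cpow_add.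
    field. split; apply cpow_neq0; assumption. }
  unfold W1. destruct (interlaceb nu ka); [|reflexivity]. cbv zeta.
  rewrite Hratio. unfold Cdiv. ring.
Qed.

Lemma Wskew_spec_point_vanish mu : antitone_parts mu -> forall nu r,
  (exists i, (1 <= i)%nat /\ (part mu i < part nu i)%nat) ->
  Wskew q p t (spec_point q t mu) a b nu (repeat 0%nat r) = 0.
Proof.
  induction mu as [|x mu IH]; intros Hd nu r [i [Hi Hlt]].
  - simpl. destruct (list_eq_dec Nat.eq_dec nu (repeat 0%nat r)) as [->|]; [|reflexivity].
    rewrite part_repeat0, part_nil in Hlt. lia.
  - apply antitone_parts_cons in Hd. destruct Hd as [Hd Hx].
    rewrite Wskew_spec_point_cons. apply sumC_eq0. intros ka Hka.
    apply in_interl_bounds in Hka. destruct Hka as [_ Hka].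
    destruct i as [|[|i]]; [lia| |].
    + change (part (x :: mu) 1) with x in Hlt. destruct (le_lt_dec (part ka 1) x).
      * rewrite W1_vanish by lia. ring.
      * rewrite IH; [ring | exact Hd|]. exists 1%nat. specialize (Hx 1%nat ltac:(lia)). lia.
    + rewrite IH; [ring | exact Hd|]. exists (S i). split; [lia|].
      rewrite part_cons_S in Hlt by lia. specialize (Hka (S i) ltac:(lia)). lia.
Qed.

Lemma Wskew_spec_point mu : antitone_parts mu -> forall r,
  Wskew q p t (spec_point q t mu) a b (mu ++ repeat 0%nat r) (repeat 0%nat (length mu + r))
  = rhs mu.
Proof.
  induction mu as [|x mu IH]; intros Hd r.
  - simpl. destruct (list_eq_dec Nat.eq_dec (repeat 0%nat r) (repeat 0%nat r)); [|contradiction].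
    unfold rhs, rhs_singles, rhs_pairs. simpl. ring.
  - pose proof (antitone_parts_cons x mu Hd) as [Hdm _].
    rewrite Wskew_spec_point_cons, (sumC_single _ _ (mu ++ repeat 0%nat (S r))).
    + replace (length (x :: mu) + r)%nat with (length mu + S r)%nat by (simpl; lia).
      rewrite IH by exact Hdm. apply W1_mul_rhs, Hd.
    + apply NoDup_interl.
    + apply in_interl; [apply antitone_parts_app_repeat0, Hd | |].
      { rewrite !length_app, !repeat_length. simpl. lia. }
      intros i Hi. rewrite !part_app_repeat0, part_cons_S by lia.
      split; [lia|]. assert (H := Hd i ltac:(lia)). rewrite part_cons_S in H by lia. exact H.
    + intros ka Hka Hne. apply in_interl_bounds in Hka. destruct Hka as [Hlen Hlow].
      replace (length (x :: mu) + r)%nat with (S (length mu) + r)%nat by reflexivity.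
      rewrite Wskew_spec_point_vanish; [ring | exact Hdm|].
      apply NNPP. intros Hnex. apply Hne, list_eq_parts.
      * rewrite Hlen, !length_app, !repeat_length. simpl. lia.
      * intros i Hi. specialize (Hlow i Hi). rewrite part_app_repeat0, part_cons_S in Hlow by lia.
        rewrite part_app_repeat0.
        assert (~ (part mu i < part ka i)%nat) by (intros Hlt; apply Hnex; exists i; auto). lia.
Qed.

End Evaluation.

Theorem mainTheorem12 (p q t a b : C) (l : list nat) :
  generic p q t a b -> is_partition l ->
  let n := length l in
  W q p t (spec_point q t l) a b l =
    prodC (seq 1 n) (fun k =>
      esf p q (q * b * zpow t (zn n - zn k)) (zpart l k)
      * esf p q (q * zpow t (zn n - zn k)) (zpart l k)
      * esf p q (a * zpow t (2 * zn n - 2 * zn k)) (2 * zpart l k)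
      / (esf p q (a / b * zpow t (zn n - zn k)) (zpart l k)
         * esf p q (a * zpow t (zn n - zn k)) (zpart l k)
         * esf p q (q * b * zpow t (zn n + 1 - 2 * zn k)) (2 * zpart l k))
      * zpow t ((zn n + 1 - 2 * zn k) * zpart l k))
    * cpow (a / (q * b)) (psize l)
    * prodC (seq 1 n) (fun i => prodC (seq (S i) (n - i)) (fun j =>
        esf p q (q * zpow t (zn j - zn i - 1)) (zpart l i - zpart l j)
        * esf p q (a * zpow t (2 * zn n - zn i - zn j)) (zpart l i + zpart l j)
        / (esf p q (q * zpow t (zn j - zn i)) (zpart l i - zpart l j)
           * esf p q (a * zpow t (1 + 2 * zn n - zn i - zn j)) (zpart l i + zpart l j)))).
Proof.
  intros [Hp [Hq [Ht [Ha [Hb Hgen]]]]] Hl n.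
  pose proof (Wskew_spec_point p q t a b Hp Hq Ht Ha Hb Hgen l (is_partition_antitone l Hl) 0)
    as Heval.
  rewrite app_nil_r, Nat.add_0_r in Heval.
  unfold W. rewrite Heval. reflexivity.
Qed.
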